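(* Under the standing setup, let $c>0$ be a constant such that $|\mathcal{F}(\mu)(4\pi\overline{\theta^{N}})|>c$ for all $N\in\mathbb{N}$. For $n\ge1$ let \[ U_{n}=\Big\{z\in S\::\:\sup_{r\ge n}|\mathcal{F}(P_{z}\mu)(r)|>c\Big\}. \] Then for every $n\ge1$, $U_n$ is an open and dense subset of $S$.
   Context: Standing setup: Identify $\mathbb{R}^2$ with $\mathbb{C}$. Let $\theta\in\mathbb{C}$ be a complex Pisot number (an algebraic integer with $\theta\notin\mathbb{R}$, $|\theta|>1$, and all Galois conjugates of $\theta$ other than $\overline{\theta}$ of modulus $<1$) such that $\arg\theta\notin\pi\mathbb{Q}$, $3<|\theta|<4$, and the minimal polynomial of $\theta$ over $\mathbb{Q}$ has constant term $1$ or $-1$. Set $\lambda=\theta^{-1}$ and $\mathcal{Y}=\{k\lambda^{l}:k,l\in\mathbb{N}\}$. Let $a_1,a_2\in\mathcal{Y}$ be such that the IFS $\Phi=\{\varphi_{k,j}(z)=\lambda z+(-1)^k a_j : k,j\in\{1,2\}\}$ satisfies the strong separation condition (the images of its attractor under the four maps are pairwise disjoint). Let $\mu$ be the unique compactly supported Borel probability measure on $\mathbb{C}$ with $\mu=\frac14\sum_{k,j\in\{1,2\}}\varphi_{k,j}\mu$ (pushforwards). Write $S=\{z\in\mathbb{C}:|z|=1\}$, $\langle z,w\rangle=\mathrm{Re}(z\overline{w})$, and $P_zw=\langle w,z\rangle$ for $z\in S$, $w\in\mathbb{C}$. For a measure $\nu$ on $\mathbb{C}$, $\mathcal{F}(\nu)(\xi)=\int\exp(i\,\mathrm{Re}(z\overline{\xi}))\,d\nu(z)$;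 for a compactly supported probability measure $\nu$ on $\mathbb{R}$, $\mathcal{F}(\nu)(r)=\int e^{ixr}\,d\nu(x)$. *)

From HB Require Import structures.
From mathcomp Require Import all_boot all_algebra.
From Stdlib Require Import Reals List ClassicalEpsilon.

Definition intR (z : int) : R :=
  match z with
  | Posz n => INR n
  | Negz n => (- INR (S n))%R
  end.

Definition is_min_poly_int (p : {poly int}) : Prop :=
  (p \is monic) /\ irreducible_poly (map_poly (intr : int -> rat) p).

Definition const_coef_pm1 (p : {poly int}) : Prop :=
  (* constant coefficient is 1 or -1 (Negz 0 = -1) *)
  seq.nth (Posz O) (polyseq p) O = Posz (S O) \/ seq.nth (Posz O) (polyseq p) O = Negz O.

Open Scope R_scope.

Definition Cplx := (R * R)%type.
Definition C0 : Cplx := (0, 0).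
Definition C1 : Cplx := (1, 0).
Definition CRe (z : Cplx) : R := fst z.
Definition CIm (z : Cplx) : R := snd z.
Definition Cadd (z w : Cplx) : Cplx := (fst z + fst w, snd z + snd w).
Definition Csub (z w : Cplx) : Cplx := (fst z - fst w, snd z - snd w).
Definition Cmul (z w : Cplx) : Cplx :=
  (fst z * fst w - snd z * snd w, fst z * snd w + snd z * fst w).
Definition Cscal (r : R) (z : Cplx) : Cplx := (r * fst z, r * snd z).
Definition Cconj (z : Cplx) : Cplx := (fst z, - snd z).
Definition Cmod (z : Cplx) : R := sqrt (fst z * fst z + snd z * snd z).
Definition Cinv (z : Cplx) : Cplx :=
  let d := fst z * fst z + snd z * snd z in (fst z / d, - snd z / d).
Fixpoint Cpow (z : Cplx) (n : nat) : Cplx :=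
  match n with O => C1 | S m => Cmul z (Cpow z m) end.
Definition cis (t : R) : Cplx := (cos t, sin t).
Definition Cinner (z w : Cplx) : R := CRe (Cmul z (Cconj w)).
Definition Cnat (k : nat) : Cplx := (INR k, 0).

Definition Peval (p : {poly int}) (z : Cplx) : Cplx :=
  foldr (fun a acc => Cadd (intR a, 0) (Cmul z acc)) C0 (polyseq p).

Definition complex_pisot_unit (theta : Cplx) : Prop :=
  CIm theta <> 0 /\ Cmod theta > 1 /\
  exists p : {poly int},
    is_min_poly_int p /\ Peval p theta = C0 /\ const_coef_pm1 p /\
    (forall w : Cplx, Peval p w = C0 -> w <> theta -> w <> Cconj theta ->
                   Cmod w < 1).

(* arg theta in pi*Q  (independent of the choice of branch of arg) *)
Definition arg_in_piQ (theta : Cplx) : Prop :=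
  exists (p : Z) (q : nat), (q > 0)%nat /\
    theta = Cscal (Cmod theta) (cis (PI * IZR p / INR q)).

Definition in_Y (lambda a : Cplx) : Prop :=
  exists k l : nat, (k >= 1)%nat /\ (l >= 1)%nat /\
    a = Cmul (Cnat k) (Cpow lambda l).

(* index (k,j) in {1,2}^2 encoded as bool*bool: false <-> 1, true <-> 2 *)
Definition Idx := (bool * bool)%type.
Definition all_idx : list Idx :=
  (false, false) :: (false, true) :: (true, false) :: (true, true) :: nil.
(* phi_{k,j}(z) = lambda z + (-1)^k a_j *)
Definition ifs_trans (a1 a2 : Cplx) (i : Idx) : Cplx :=
  let a := if snd i then a2 else a1 in
  if fst i then a else Cscal (-1) a.
Definition phi (lambda a1 a2 : Cplx) (i : Idx) (z : Cplx) : Cplx :=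
  Cadd (Cmul lambda z) (ifs_trans a1 a2 i).

(* attractor K = image of the coding map:
   x in K iff x = sum_{m>=0} lambda^m t_{d m} for some d : nat -> Idx *)
Fixpoint code_partial (lambda a1 a2 : Cplx) (d : nat -> Idx) (n : nat) : Cplx :=
  match n with
  | O => C0
  | S m => Cadd (code_partial lambda a1 a2 d m)
                (Cmul (Cpow lambda m) (ifs_trans a1 a2 (d m)))
  end.
Definition Cconv (u : nat -> Cplx) (l : Cplx) : Prop :=
  Un_cv (fun n => fst (u n)) (fst l) /\ Un_cv (fun n => snd (u n)) (snd l).
Definition attractor (lambda a1 a2 : Cplx) (x : Cplx) : Prop :=
  exists d : nat -> Idx, Cconv (code_partial lambda a1 a2 d) x.

Definition SSC (lambda a1 a2 : Cplx) : Prop :=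
  forall i j : Idx, i <> j -> forall x y : Cplx,
    attractor lambda a1 a2 x -> attractor lambda a1 a2 y ->
    phi lambda a1 a2 i x <> phi lambda a1 a2 j y.

(* atoms of T^N delta_0, where T nu = 1/4 sum_i phi_i nu (uniform weights);
   mu is the weak limit of T^N delta_0 *)
Fixpoint atoms (lambda a1 a2 : Cplx) (N : nat) : list Cplx :=
  match N with
  | O => C0 :: nil
  | S M => flat_map (fun i => map (phi lambda a1 a2 i) (atoms lambda a1 a2 M))
                    all_idx
  end.

Definition Csum (l : list Cplx) : Cplx := fold_right Cadd C0 l.
(* Fourier transform of the uniform atomic measure on a list *)
Definition avg_list (l : list Cplx) (f : Cplx -> Cplx) : Cplx :=
  Cscal (/ INR (length l)) (Csum (map f l)).

(* limit of a complex sequence (arbitrary value if it does not converge) *)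
Definition Clim (u : nat -> Cplx) : Cplx :=
  epsilon (inhabits C0) (fun l => Cconv u l).

(* F(mu)(xi) = int exp(i Re(z conj xi)) dmu(z) *)
Definition FT_mu (lambda a1 a2 : Cplx) (xi : Cplx) : Cplx :=
  Clim (fun N => avg_list (atoms lambda a1 a2 N)
                          (fun z => cis (Cinner z xi))).

(* F(P_z mu)(r) = int exp(i x r) d(P_z mu)(x), P_z w = <w,z> *)
Definition FT_proj_mu (lambda a1 a2 : Cplx) (z : Cplx) (r : R) : Cplx :=
  Clim (fun N => avg_list (atoms lambda a1 a2 N)
                          (fun w => cis (Cinner w z * r))).

Definition on_S (z : Cplx) : Prop := Cmod z = 1.

Definition U_set (lambda a1 a2 : Cplx) (c : R) (n : nat) (z : Cplx) : Prop :=
  on_S z /\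
  exists s : R,
    is_lub (fun y => exists r : R, r >= INR n /\
                       y = Cmod (FT_proj_mu lambda a1 a2 z r)) s /\
    s > c.

Definition open_in_S (U : Cplx -> Prop) : Prop :=
  (forall z, U z -> on_S z) /\
  forall z, U z -> exists eps, eps > 0 /\
    forall w, on_S w -> Cmod (Csub w z) < eps -> U w.
Definition dense_in_S (U : Cplx -> Prop) : Prop :=
  forall z, on_S z -> forall eps, eps > 0 ->
    exists w, U w /\ Cmod (Csub w z) < eps.

(* Write F for the Fourier transform of mu.  Then F(P_z mu)(r) = F(mu)(r z),
   and F(mu) is bounded by 1 and Lipschitz: mu is the limit of the uniform
   measures on the level-N points of the IFS, which all lie in a fixed disc,
   and consecutive levels differ by O(|lambda|^N).  Openness of U_n follows by
   continuity.  For density write theta = rho e^{it}; as t / 2 pi is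
   irrational, the directions e^{-iNt} with N >= n are dense in S (Dirichlet
   and Kronecker), and along e^{-iNt} at radius r = 4 pi rho^N >= n we read off
   F(mu)(4 pi conj(theta^N)), whose modulus exceeds c. *)

From HB Require Import structures.
From mathcomp Require Import all_boot all_algebra.
From Stdlib Require Import Reals List ClassicalEpsilon.
From Stdlib Require Import Lra Lia ZArith FunctionalExtensionality Classical Permutation.
From Coquelicot Require Import Hierarchy Lim_seq Series.
From Coquelicot Require Complex.
Open Scope R_scope.

(* [Cadd] and [Cmul] are convertible to Coquelicot's [Cplus] and [Cmult]; only
   the modulus needs an explicit bridge. *)
Lemma Cmod_Coquelicot z : Cmod z = Complex.Cmod z.
Proof. unfold Cmod, Complex.Cmod; f_equal; simpl; ring. Qed.

Lemma Cmod_ge0 z : 0 <= Cmod z.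
Proof. apply sqrt_pos. Qed.

Lemma Cmod_C0 : Cmod C0 = 0.
Proof. rewrite Cmod_Coquelicot; apply Complex.Cmod_0. Qed.

Lemma Cmod_Cadd_le z w : Cmod (Cadd z w) <= Cmod z + Cmod w.
Proof. rewrite !Cmod_Coquelicot; apply Complex.Cmod_triangle. Qed.

Lemma Cmod_Cmul z w : Cmod (Cmul z w) = Cmod z * Cmod w.
Proof. rewrite !Cmod_Coquelicot; apply Complex.Cmod_mult. Qed.

Lemma Cmod_Cscal r z : Cmod (Cscal r z) = Rabs r * Cmod z.
Proof.
  replace (Cscal r z) with (Cmul (r, 0) z) by (unfold Cmul, Cscal; simpl; f_equal; ring).
  rewrite Cmod_Cmul (Cmod_Coquelicot (r, 0)); f_equal; apply Complex.Cmod_R.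
Qed.

Lemma Cmod_Cconj z : Cmod (Cconj z) = Cmod z.
Proof. rewrite !Cmod_Coquelicot; apply Complex.Cmod_conj. Qed.

Lemma Cmod_Cinv z : 0 < Cmod z -> Cmod (Cinv z) = / Cmod z.
Proof.
  intro Hz. replace (Cinv z) with (Complex.Cinv z).
  2:{ unfold Cinv, Complex.Cinv; cbv zeta.
      replace (fst z ^ 2 + snd z ^ 2) with (fst z * fst z + snd z * snd z) by ring.
      reflexivity. }
  rewrite !Cmod_Coquelicot in Hz |- *. apply Complex.Cmod_inv, Complex.Cmod_gt_0, Hz.
Qed.

Lemma Rabs_fst_le_Cmod z : Rabs (fst z) <= Cmod z.
Proof. rewrite Cmod_Coquelicot; eapply Rle_trans; [apply Rmax_l | apply Complex.Rmax_Cmod]. Qed.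

Lemma Rabs_snd_le_Cmod z : Rabs (snd z) <= Cmod z.
Proof. rewrite Cmod_Coquelicot; eapply Rle_trans; [apply Rmax_r | apply Complex.Rmax_Cmod]. Qed.

Lemma Cmod_Csub_sym z w : Cmod (Csub z w) = Cmod (Csub w z).
Proof. unfold Cmod, Csub; simpl; f_equal; ring. Qed.

Lemma Cmod_reverse_triangle z w : Cmod z - Cmod (Csub z w) <= Cmod w.
Proof.
  replace z with (Cadd w (Csub z w)) at 1 by (unfold Cadd, Csub; destruct z; simpl; f_equal; ring).
  pose proof (Cmod_Cadd_le w (Csub z w)); lra.
Qed.

Lemma Cmod_cis t : Cmod (cis t) = 1.
Proof.
  unfold Cmod, cis; simpl. rewrite -sqrt_1; f_equal.
  pose proof (sin2_cos2 t); unfold Rsqr in *; lra.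
Qed.

Lemma Rabs_sin_le x : Rabs (sin x) <= Rabs x.
Proof.
  assert (Hpos : forall y, 0 < y -> Rabs (sin y) <= y).
  { intros y Hy. pose proof (sin_lt_x y Hy). apply Rabs_le; split; [|lra].
    destruct (Rle_lt_dec 1 y); [pose proof (SIN_bound y); lra|].
    assert (0 <= sin y) by (apply sin_ge_0; pose proof PI2_1; lra). lra. }
  destruct (Rtotal_order x 0) as [Hx|[->|Hx]].
  - rewrite -Rabs_Ropp -sin_neg (Rabs_left x Hx). apply Hpos; lra.
  - rewrite sin_0; lra.
  - rewrite (Rabs_right x); [apply Hpos|]; lra.
Qed.

(* |e^{ia} - e^{ib}| = 2 |sin((a - b)/2)| *)
Lemma Cmod_cis_sub_le a b : Cmod (Csub (cis a) (cis b)) <= Rabs (a - b).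
Proof.
  set (h := (a - b) / 2).
  assert (Hsq : (cos a - cos b) * (cos a - cos b) + (sin a - sin b) * (sin a - sin b)
                = Rsqr (2 * sin h)).
  { assert (Hc : cos (a - b) = 1 - 2 * sin h * sin h).
    { replace (a - b) with (2 * h) by (unfold h; field). apply cos_2a_sin. }
    rewrite cos_minus in Hc.
    pose proof (sin2_cos2 a); pose proof (sin2_cos2 b); unfold Rsqr in *; nra. }
  unfold Cmod, Csub, cis; simpl. rewrite Hsq sqrt_Rsqr_abs Rabs_mult Rabs_right; [|lra].
  replace (a - b) with (2 * h) by (unfold h; field).
  rewrite Rabs_mult (Rabs_right 2); [|lra]. pose proof (Rabs_sin_le h); lra.
Qed.

Lemma Rabs_Cinner_le z w : Rabs (Cinner z w) <= Cmod z * Cmod w.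
Proof.
  rewrite -(Cmod_Cconj w) -Cmod_Cmul. apply Rabs_fst_le_Cmod.
Qed.

Lemma Cinner_sub_l z w xi : Cinner z xi - Cinner w xi = Cinner (Csub z w) xi.
Proof. unfold Cinner, CRe, Cmul, Cconj, Csub; simpl; ring. Qed.

Lemma Cinner_sub_r z xi xi' : Cinner z xi - Cinner z xi' = Cinner z (Csub xi xi').
Proof. unfold Cinner, CRe, Cmul, Cconj, Csub; simpl; ring. Qed.

Lemma Cmod_cis_Cinner_sub_le z w xi :
  Cmod (Csub (cis (Cinner z xi)) (cis (Cinner w xi))) <= Cmod xi * Cmod (Csub z w).
Proof.
  eapply Rle_trans; [apply Cmod_cis_sub_le|].
  rewrite Cinner_sub_l Rmult_comm. apply Rabs_Cinner_le.
Qed.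

Lemma Csum_app (l1 l2 : list Cplx) : Csum (l1 ++ l2) = Cadd (Csum l1) (Csum l2).
Proof.
  induction l1 as [|z l1 IH]; simpl; [|rewrite IH];
    unfold Cadd, C0; apply injective_projections; simpl; ring.
Qed.

(* [avg_list] for lists of any type, so that one can also average over [all_idx]. *)
Definition avg {A : Type} (l : list A) (f : A -> Cplx) : Cplx :=
  Cscal (/ INR (length l)) (Csum (map f l)).

Section Average.
Context {A : Type}.
Implicit Types (l : list A) (f g : A -> Cplx).

Lemma Cmod_Csum_le l f B :
  (forall x, In x l -> Cmod (f x) <= B) -> Cmod (Csum (map f l)) <= INR (length l) * B.
Proof.
  induction l as [|x l IH]; intro Hf; [simpl; rewrite Cmod_C0; lra|].
  change (Csum (map f (x :: l))) with (Cadd (f x) (Csum (map f l))).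
  rewrite [length _]/= S_INR. eapply Rle_trans; [apply Cmod_Cadd_le|].
  pose proof (Hf x (in_eq x l)). pose proof (IH (fun y Hy => Hf y (in_cons x y l Hy))). lra.
Qed.

(* The hypothesis [0 <= B] covers the empty list, on which [avg] is [0]. *)
Lemma Cmod_avg_le l f B :
  0 <= B -> (forall x, In x l -> Cmod (f x) <= B) -> Cmod (avg l f) <= B.
Proof.
  intros HB Hf. unfold avg. rewrite Cmod_Cscal.
  destruct (Nat.eq_dec (length l) 0) as [Hl|Hl].
  - destruct l; [simpl; rewrite Cmod_C0; lra | discriminate].
  - pose proof (lt_0_INR _ (proj1 (Nat.neq_0_lt_0 _) Hl)) as Hpos.
    rewrite Rabs_inv Rabs_right; [|lra].
    apply (Rmult_le_reg_l (INR (length l))); [exact Hpos|].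
    rewrite -Rmult_assoc Rinv_r; [|lra]. rewrite Rmult_1_l. exact (Cmod_Csum_le l f B Hf).
Qed.

Lemma Csum_map_sub l f g :
  Csum (map (fun x => Csub (f x) (g x)) l) = Csub (Csum (map f l)) (Csum (map g l)).
Proof.
  induction l as [|x l IH]; simpl; [|rewrite IH];
    unfold Csub, Cadd, C0; apply injective_projections; simpl; ring.
Qed.

Lemma Csum_map_scal l f r :
  Csum (map (fun x => Cscal r (f x)) l) = Cscal r (Csum (map f l)).
Proof.
  induction l as [|x l IH]; simpl; [|rewrite IH];
    unfold Cscal, Cadd, C0; apply injective_projections; simpl; ring.
Qed.

Lemma avg_sub l f g : Csub (avg l f) (avg l g) = avg l (fun x => Csub (f x) (g x)).
Proof.
  unfold avg. rewrite Csum_map_sub.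
  unfold Cscal, Csub; apply injective_projections; simpl; ring.
Qed.

Lemma Cmod_avg_sub_le l f g B :
  0 <= B -> (forall x, In x l -> Cmod (Csub (f x) (g x)) <= B) ->
  Cmod (Csub (avg l f) (avg l g)) <= B.
Proof. rewrite avg_sub. apply Cmod_avg_le. Qed.

Lemma avg_const l z : l <> nil -> avg l (fun _ => z) = z.
Proof.
  intro Hl. unfold avg.
  replace (Csum (map (fun _ => z) l)) with (Cscal (INR (length l)) z).
  - assert (INR (length l) <> 0).
    { destruct l as [|x l]; [contradiction|].
      rewrite [length _]/= S_INR; pose proof (pos_INR (length l)); lra. }
    unfold Cscal; apply injective_projections; simpl; field; assumption.
  - clear Hl; induction l as [|x l IH].
    + unfold Cscal, C0; apply injective_projections; simpl; ring.
    + change (Csum (map (fun _ => z) (x :: l))) with (Cadd z (Csum (map (fun _ => z) l))).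
      rewrite -IH [length _]/= S_INR.
      unfold Cscal, Cadd; apply injective_projections; simpl; ring.
Qed.

End Average.

Lemma avg_map {A B : Type} (h : A -> B) (l : list A) (f : B -> Cplx) :
  avg (map h l) f = avg l (fun x => f (h x)).
Proof. unfold avg. rewrite length_map map_map. reflexivity. Qed.

Lemma avg_flat_map {A B : Type} (g : A -> list B) (l : list A) (f : B -> Cplx) (n : nat) :
  n <> O -> (forall x, In x l -> length (g x) = n) ->
  avg (flat_map g l) f = avg l (fun x => avg (g x) f).
Proof.
  intros Hn Hlen. assert (Hn' : INR n <> 0) by (apply not_0_INR, Hn).
  assert (Hsum : Csum (map f (flat_map g l))
                 = Cscal (INR n) (Csum (map (fun x => avg (g x) f) l))).
  { rewrite -Csum_map_scal. induction l as [|x l IH]; [reflexivity|].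
    rewrite [flat_map _ _]/= map_app Csum_app IH; [|intros y Hy; apply Hlen, in_cons, Hy].
    change (Csum (map ?h (x :: l))) with (Cadd (h x) (Csum (map h l))). f_equal.
    unfold avg. rewrite (Hlen x (in_eq x l)).
    unfold Cscal; apply injective_projections; simpl; field; exact Hn'. }
  unfold avg at 1. erewrite Hsum, flat_map_constant_length; [|exact Hlen].
  rewrite mult_INR Rinv_mult.
  assert (Hcancel : forall s, / INR (length l) * / INR n * (INR n * s) = / INR (length l) * s).
  { intro s. rewrite (Rmult_assoc _ (/ INR n)) -(Rmult_assoc (/ INR n)) Rinv_l; [ring | exact Hn']. }
  unfold avg, Cscal; apply injective_projections; apply Hcancel.
Qed.

Lemma Clim_spec u : (exists l, Cconv u l) -> Cconv u (Clim u).
Proof. apply epsilon_spec. Qed.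

Lemma Un_cv_of_geometric_increments (u : nat -> R) K q :
  0 <= q < 1 -> (forall n, Rabs (u (S n) - u n) <= K * q ^ n) -> exists l, Un_cv u l.
Proof.
  intros Hq Hu.
  assert (Hd : ex_series (fun n => u (S n) - u n)).
  { apply (@ex_series_le R_AbsRing R_CompleteNormedModule _ (fun n => K * q ^ n)); [exact Hu|].
    apply (ex_series_scal_l K (pow q)), ex_series_geom. rewrite Rabs_right; lra. }
  destruct Hd as [s Hs].
  exists (u O + s). apply is_lim_seq_Reals, is_lim_seq_incr_1.
  apply (is_lim_seq_ext (fun N => u O + sum_n (fun n => u (S n) - u n) N)).
  - intro N; induction N as [|N IH]; [rewrite sum_O | rewrite sum_Sn -Rplus_assoc IH];
      unfold plus; simpl; ring.
  - apply is_lim_seq_plus'; [apply is_lim_seq_const | exact Hs].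
Qed.

Lemma Cconv_of_geometric_increments (u : nat -> Cplx) K q :
  0 <= q < 1 -> (forall n, Cmod (Csub (u (S n)) (u n)) <= K * q ^ n) -> exists l, Cconv u l.
Proof.
  intros Hq Hu.
  destruct (Un_cv_of_geometric_increments (fun n => fst (u n)) K q Hq) as [l1 H1].
  { intro n. eapply Rle_trans; [apply (Rabs_fst_le_Cmod (Csub _ _)) | apply Hu]. }
  destruct (Un_cv_of_geometric_increments (fun n => snd (u n)) K q Hq) as [l2 H2].
  { intro n. eapply Rle_trans; [apply (Rabs_snd_le_Cmod (Csub _ _)) | apply Hu]. }
  exists (l1, l2); split; assumption.
Qed.

Lemma Cconv_Csub u v l l' :
  Cconv u l -> Cconv v l' -> Cconv (fun N => Csub (u N) (v N)) (Csub l l').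
Proof. intros [Hu1 Hu2] [Hv1 Hv2]; split; apply CV_minus; assumption. Qed.

Lemma Cconv_Cmod u l : Cconv u l -> Un_cv (fun N => Cmod (u N)) (Cmod l).
Proof.
  intros [H1 H2]. apply continuity_seq.
  - apply continuity_pt_sqrt. nra.
  - apply CV_plus; apply CV_mult; assumption.
Qed.

Lemma Cconv_Cmod_le u l B : Cconv u l -> (forall N, Cmod (u N) <= B) -> Cmod l <= B.
Proof.
  intros Hu HB.
  apply (is_lim_seq_le (fun N => Cmod (u N)) (fun _ => B)
           (Rbar.Finite (Cmod l)) (Rbar.Finite B) HB).
  - apply is_lim_seq_Reals, Cconv_Cmod, Hu.
  - apply is_lim_seq_const.
Qed.

(** * The self-similar measure and its Fourier transform *)

Section SelfSimilarMeasure.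
Variables lam a1 a2 : Cplx.

Lemma Cmod_ifs_trans_le i : Cmod (ifs_trans a1 a2 i) <= Cmod a1 + Cmod a2.
Proof.
  pose proof (Cmod_ge0 a1); pose proof (Cmod_ge0 a2).
  destruct i as [[|] [|]]; unfold ifs_trans; simpl;
    rewrite ?Cmod_Cscal ?Rabs_Ropp ?Rabs_R1; lra.
Qed.

Lemma phi_Csub i x y : Csub (phi lam a1 a2 i x) (phi lam a1 a2 i y) = Cmul lam (Csub x y).
Proof. unfold phi, Csub, Cadd, Cmul; apply injective_projections; simpl; ring. Qed.

Lemma atoms_succ N :
  atoms lam a1 a2 (S N) = flat_map (fun i => map (phi lam a1 a2 i) (atoms lam a1 a2 N)) all_idx.
Proof. reflexivity. Qed.

Lemma length_atoms_neq0 N : length (atoms lam a1 a2 N) <> O.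
Proof.
  induction N as [|N IH]; [discriminate|].
  rewrite atoms_succ (flat_map_constant_length (c := length (atoms lam a1 a2 N))).
  - simpl; lia.
  - intros i _; apply length_map.
Qed.

Lemma avg_atoms_0 f : avg (atoms lam a1 a2 0) f = f C0.
Proof. unfold avg; simpl. unfold Cscal, Cadd; apply injective_projections; simpl; field. Qed.

Lemma avg_atoms_succ N f :
  avg (atoms lam a1 a2 (S N)) f =
  avg all_idx (fun i => avg (atoms lam a1 a2 N) (fun y => f (phi lam a1 a2 i y))).
Proof.
  rewrite atoms_succ (avg_flat_map _ _ _ (length (atoms lam a1 a2 N))).
  - f_equal; apply functional_extensionality; intro i; apply avg_map.
  - apply length_atoms_neq0.
  - intros i _; apply length_map.
Qed.

(* Peeling off the first IFS step turns an [L]-Lipschitz [f] into the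
   [L |lam|]-Lipschitz functions [f \o phi i]. *)
Lemma avg_atoms_succ_sub_le N : forall f L, 0 <= L ->
  (forall x y, Cmod (Csub (f x) (f y)) <= L * Cmod (Csub x y)) ->
  Cmod (Csub (avg (atoms lam a1 a2 (S N)) f) (avg (atoms lam a1 a2 N) f))
    <= L * Cmod lam ^ N * (Cmod a1 + Cmod a2).
Proof.
  assert (Hbound : 0 <= Cmod a1 + Cmod a2)
    by (pose proof (Cmod_ge0 a1); pose proof (Cmod_ge0 a2); lra).
  induction N as [|N IH]; intros f L HL Hf.
  - rewrite avg_atoms_succ avg_atoms_0 -(avg_const all_idx (f C0)); [|discriminate].
    apply Cmod_avg_sub_le; [rewrite pow_O; nra|]. intros i _.
    rewrite avg_atoms_0 pow_O Rmult_1_r. eapply Rle_trans; [apply Hf|].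
    apply Rmult_le_compat_l; [exact HL|].
    replace (Csub (phi lam a1 a2 i C0) C0) with (ifs_trans a1 a2 i)
      by (unfold phi, Csub, Cadd, Cmul, C0; apply injective_projections; simpl; ring).
    apply Cmod_ifs_trans_le.
  - rewrite (avg_atoms_succ (S N)) (avg_atoms_succ N).
    apply Cmod_avg_sub_le.
    { repeat apply Rmult_le_pos; auto using pow_le, Cmod_ge0. }
    intros i _.
    replace (L * Cmod lam ^ S N) with ((L * Cmod lam) * Cmod lam ^ N)
      by (rewrite [_ ^ S N]/=; ring).
    apply IH; [pose proof (Cmod_ge0 lam); nra|]. intros x y.
    cbv beta. rewrite Rmult_assoc -Cmod_Cmul -(phi_Csub i). apply Hf.
Qed.
End SelfSimilarMeasure.

(* Every [phi i] maps the closed disc of this radius into itself. *)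
Definition radius (lam a1 a2 : Cplx) : R := (Cmod a1 + Cmod a2) / (1 - Cmod lam).

Definition FT_approx (lam a1 a2 xi : Cplx) (N : nat) : Cplx :=
  avg (atoms lam a1 a2 N) (fun z => cis (Cinner z xi)).

Section FourierTransform.
Variables lam a1 a2 : Cplx.
Hypothesis Hlam : Cmod lam < 1.

Lemma radius_ge0 : 0 <= radius lam a1 a2.
Proof.
  unfold radius. pose proof (Cmod_ge0 a1); pose proof (Cmod_ge0 a2).
  apply Rmult_le_pos; [lra | apply Rlt_le, Rinv_0_lt_compat; lra].
Qed.

Lemma Cmod_atoms_le N w : In w (atoms lam a1 a2 N) -> Cmod w <= radius lam a1 a2.
Proof.
  revert w; induction N as [|N IH]; intro w.
  - intros [<-|[]]. rewrite Cmod_C0; apply radius_ge0.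
  - rewrite atoms_succ. intros [i [_ Hw]]%in_flat_map. apply in_map_iff in Hw as [y [<- Hy]].
    unfold phi. eapply Rle_trans; [apply Cmod_Cadd_le|]. rewrite Cmod_Cmul.
    pose proof (Cmod_ifs_trans_le a1 a2 i). pose proof (IH y Hy).
    assert (Cmod lam * Cmod y <= Cmod lam * radius lam a1 a2)
      by (apply Rmult_le_compat_l; [apply Cmod_ge0 | assumption]).
    assert (Cmod lam * radius lam a1 a2 + (Cmod a1 + Cmod a2) = radius lam a1 a2)
      by (unfold radius; field; lra).
    lra.
Qed.

Lemma FT_approx_conv xi : Cconv (FT_approx lam a1 a2 xi) (FT_mu lam a1 a2 xi).
Proof.
  apply Clim_spec, (Cconv_of_geometric_increments _ (Cmod xi * (Cmod a1 + Cmod a2)) (Cmod lam)).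
  - pose proof (Cmod_ge0 lam); lra.
  - intro N. eapply Rle_trans.
    + apply (avg_atoms_succ_sub_le _ _ _ _ _ (Cmod xi)); [apply Cmod_ge0|].
      intros; apply Cmod_cis_Cinner_sub_le.
    + right; ring.
Qed.

Lemma Cmod_FT_mu_le1 xi : Cmod (FT_mu lam a1 a2 xi) <= 1.
Proof.
  apply (Cconv_Cmod_le _ _ _ (FT_approx_conv xi)). intro N.
  apply Cmod_avg_le; [lra|]. intros z _; rewrite Cmod_cis; lra.
Qed.

Lemma FT_mu_lipschitz xi xi' :
  Cmod (Csub (FT_mu lam a1 a2 xi) (FT_mu lam a1 a2 xi')) <= radius lam a1 a2 * Cmod (Csub xi xi').
Proof.
  apply (Cconv_Cmod_le _ _ _ (Cconv_Csub _ _ _ _ (FT_approx_conv xi) (FT_approx_conv xi'))).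
  intro N. apply Cmod_avg_sub_le; [apply Rmult_le_pos; [apply radius_ge0 | apply Cmod_ge0]|].
  intros w Hw. eapply Rle_trans; [apply Cmod_cis_sub_le|].
  rewrite Cinner_sub_r. eapply Rle_trans; [apply Rabs_Cinner_le|].
  apply Rmult_le_compat_r; [apply Cmod_ge0 | exact (Cmod_atoms_le N w Hw)].
Qed.

End FourierTransform.

Lemma FT_proj_mu_FT_mu lam a1 a2 z r : FT_proj_mu lam a1 a2 z r = FT_mu lam a1 a2 (Cscal r z).
Proof.
  unfold FT_proj_mu, FT_mu. do 2 f_equal. apply functional_extensionality; intro N.
  do 2 f_equal. apply functional_extensionality; intro w. f_equal.
  unfold Cinner, CRe, Cmul, Cconj, Cscal; simpl; ring.
Qed.

(** * Openness of U_n *)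

Lemma lub_gt_iff (E : R -> Prop) c :
  bound E -> (exists x, E x) ->
  (exists s, is_lub E s /\ s > c) <-> (exists x, E x /\ x > c).
Proof.
  intros Hbound Hne. split.
  - intros [s [[_ Hleast] Hs]]. apply NNPP; intro Hnone.
    assert (s <= c); [|lra].
    apply Hleast; intros x Hx. apply Rnot_lt_le; intro Hcx.
    apply Hnone; exists x; split; assumption.
  - intros [x [Hx Hxc]]. destruct (completeness E Hbound Hne) as [s Hs].
    exists s; split; [exact Hs|]. pose proof (proj1 Hs x Hx); lra.
Qed.

Section Uset.
Variables lam a1 a2 : Cplx.
Hypothesis Hlam : Cmod lam < 1.
Variables (c : R) (n : nat).

Lemma U_set_iff z :
  U_set lam a1 a2 c n z <->
  on_S z /\ exists r, r >= INR n /\ Cmod (FT_mu lam a1 a2 (Cscal r z)) > c.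
Proof.
  unfold U_set. apply and_iff_compat_l.
  rewrite lub_gt_iff.
  - split.
    + intros [x [[r [Hr ->]] Hx]]. exists r. rewrite -FT_proj_mu_FT_mu. split; assumption.
    + intros [r [Hr Hx]]. exists (Cmod (FT_mu lam a1 a2 (Cscal r z))).
      split; [exists r; split; [exact Hr | rewrite FT_proj_mu_FT_mu; reflexivity] | exact Hx].
  - exists 1. intros x [r [_ ->]]. rewrite FT_proj_mu_FT_mu. apply Cmod_FT_mu_le1, Hlam.
  - exists (Cmod (FT_proj_mu lam a1 a2 z (INR n))), (INR n). split; [lra | reflexivity].
Qed.

Lemma U_set_open : open_in_S (U_set lam a1 a2 c n).
Proof.
  split; [intros z [Hz _]; exact Hz|].
  intros z Hz. apply U_set_iff in Hz as [_ [r [Hr Hrz]]].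
  assert (Hr0 : 0 <= r) by (pose proof (pos_INR n); lra).
  set (v := Cmod (FT_mu lam a1 a2 (Cscal r z)) - c).
  set (K := radius lam a1 a2 * r + 1).
  assert (HK : 1 <= K)
    by (pose proof (Rmult_le_pos _ r (radius_ge0 lam a1 a2 Hlam) Hr0); unfold K; lra).
  exists (v / K). split; [apply Rdiv_lt_0_compat; unfold v; lra|].
  intros w Hw Hwz. apply U_set_iff. split; [exact Hw|]. exists r; split; [exact Hr|].
  assert (Hclose : Cmod (Csub (FT_mu lam a1 a2 (Cscal r z)) (FT_mu lam a1 a2 (Cscal r w))) < v).
  { eapply Rle_lt_trans; [apply FT_mu_lipschitz, Hlam|].
    replace (Csub (Cscal r z) (Cscal r w)) with (Cscal r (Csub z w))
      by (unfold Csub, Cscal; apply injective_projections; simpl; ring).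
    rewrite Cmod_Cscal Cmod_Csub_sym (Rabs_right r); [|lra].
    apply (Rmult_lt_compat_r K) in Hwz; [|lra].
    unfold Rdiv in Hwz. rewrite Rmult_assoc Rinv_l in Hwz; [|lra].
    pose proof (Cmod_ge0 (Csub w z)). unfold K in Hwz. nra. }
  pose proof (Cmod_reverse_triangle (FT_mu lam a1 a2 (Cscal r z)) (FT_mu lam a1 a2 (Cscal r w))).
  unfold v in Hclose. lra.
Qed.
End Uset.

(** * Diophantine approximation *)

Lemma pigeonhole (f : nat -> nat) (M : nat) :
  (forall i, (i <= M)%coq_nat -> (f i < M)%coq_nat) ->
  exists i j, (i < j)%coq_nat /\ (j <= M)%coq_nat /\ f i = f j.
Proof.
  intro Hf.
  destruct (@Permutation_pigeonhole_rel _ _ (fun i a => f i = a) (seq 0 (S M)) (seq 0 M))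
    as [i [j [l [Hperm [a [_ [Hi Hj]]]]]]].
  - apply Forall_forall; intros i Hi. apply Exists_exists; exists (f i).
    apply in_seq in Hi. split; [apply in_seq; pose proof (Hf i ltac:(lia)); lia | reflexivity].
  - rewrite !length_seq; lia.
  - pose proof (Permutation_NoDup Hperm (seq_NoDup _ _)) as Hnd.
    apply NoDup_cons_iff in Hnd as [Hnin _].
    assert (Hij : i <> j) by (intros ->; apply Hnin, in_eq).
    assert (HiM : In i (seq 0 (S M))) by (apply (Permutation_in _ (Permutation_sym Hperm)), in_eq).
    assert (HjM : In j (seq 0 (S M)))
      by (apply (Permutation_in _ (Permutation_sym Hperm)), in_cons, in_eq).
    apply in_seq in HiM; apply in_seq in HjM.
    destruct (proj1 (Nat.lt_gt_cases i j) Hij) as [Hlt|Hlt];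
      [exists i, j | exists j, i]; repeat split; try lia; congruence.
Qed.

Lemma Int_part_eq_dist x y : Int_part x = Int_part y -> Rabs (x - y) < 1.
Proof.
  intro H. pose proof (base_Int_part x) as Hx; pose proof (base_Int_part y) as Hy.
  rewrite H in Hx. apply Rabs_def1; lra.
Qed.

Lemma dirichlet (alpha : R) (M : nat) : (1 <= M)%coq_nat ->
  exists (d : nat) (k : Z), (1 <= d)%coq_nat /\ Rabs (INR d * alpha - IZR k) < / INR M.
Proof.
  intro HM. assert (HMpos : 0 < INR M) by (apply lt_0_INR; lia).
  set (y i := INR M * frac_part (INR i * alpha)).
  assert (Hy : forall i, (0 <= Int_part (y i) < Z.of_nat M)%Z).
  { intro i. pose proof (base_fp (INR i * alpha)). pose proof (base_Int_part (y i)).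
    assert (0 <= y i < INR M) by (unfold y; split; nra).
    split.
    - assert (Hneg : IZR (-1) < IZR (Int_part (y i))) by lra. apply lt_IZR in Hneg; lia.
    - apply lt_IZR; rewrite -INR_IZR_INZ; lra. }
  destruct (pigeonhole (fun i => Z.to_nat (Int_part (y i))) M) as [i [j [Hij [HjM Heq]]]].
  { intros i _. pose proof (Hy i); lia. }
  assert (Hclose : Rabs (y j - y i) < 1).
  { apply Int_part_eq_dist. pose proof (Hy i); pose proof (Hy j); lia. }
  set (d := (j - i)%coq_nat). set (k := (Int_part (INR j * alpha) - Int_part (INR i * alpha))%Z).
  assert (Hdiff : y j - y i = INR M * (INR d * alpha - IZR k)).
  { unfold y, frac_part, d, k. rewrite minus_INR; [|lia]. rewrite minus_IZR. ring. }
  exists d, k. split; [unfold d; lia|].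
  rewrite Hdiff Rabs_mult (Rabs_right (INR M)) in Hclose; [|lra].
  apply (Rmult_lt_reg_l (INR M)); [exact HMpos|]. rewrite Rinv_r; lra.
Qed.

(* Take [m] with [beta + m > N0 eta], then [j] the least integer above [(beta + m) / eta]. *)
Lemma multiple_near_mod1 (eta beta : R) (N0 : nat) : 0 < eta ->
  exists (j : nat) (m : Z), (N0 <= j)%coq_nat /\ Rabs (INR j * eta - beta - IZR m) <= eta.
Proof.
  intro Heta.
  set (m := up (INR N0 * eta - beta)). pose proof (archimed (INR N0 * eta - beta)) as [Hm _].
  set (x := beta + IZR m).
  assert (HN0x : INR N0 < x / eta).
  { apply (Rmult_lt_reg_r eta); [exact Heta|]. unfold Rdiv; rewrite Rmult_assoc Rinv_l; [|lra].
    unfold x, m in *; lra. }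
  set (j := up (x / eta)). pose proof (archimed (x / eta)) as [Hj1 Hj2]. fold j in Hj1, Hj2.
  assert (Hj0 : (0 <= j)%Z) by (apply le_IZR; pose proof (pos_INR N0); lra).
  exists (Z.to_nat j), m. rewrite INR_IZR_INZ Z2Nat.id; [|exact Hj0]. split.
  - apply INR_le. rewrite (INR_IZR_INZ (Z.to_nat j)) Z2Nat.id; [lra | exact Hj0].
  - assert (Hlo : x < IZR j * eta).
    { replace x with (x / eta * eta) at 1 by (field; lra). apply Rmult_lt_compat_r; lra. }
    assert (Hhi : IZR j * eta <= x + eta).
    { replace (x + eta) with ((x / eta + 1) * eta) by (field; lra). apply Rmult_le_compat_r; lra. }
    apply Rabs_le. unfold x in *; lra.
Qed.

Lemma kronecker (alpha beta delta : R) (N0 : nat) :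
  (forall (d : nat) (k : Z), (1 <= d)%coq_nat -> INR d * alpha <> IZR k) -> 0 < delta ->
  exists (N : nat) (k : Z), (N0 <= N)%coq_nat /\ Rabs (INR N * alpha - beta - IZR k) < delta.
Proof.
  intros Hirr Hdelta.
  destruct (archimed_cor1 delta Hdelta) as [M [HM HM0]].
  destruct (dirichlet alpha M HM0) as [d [k [Hd Hdk]]].
  set (eta := INR d * alpha - IZR k) in *.
  assert (Heta : eta <> 0) by (unfold eta; intro H; apply (Hirr d k Hd); lra).
  destruct (Rlt_or_le 0 eta) as [Hpos|Hneg].
  - destruct (multiple_near_mod1 eta beta N0 Hpos) as [j [m [Hj Hjm]]].
    exists (j * d)%coq_nat, (Z.of_nat j * k + m)%Z. split; [nia|].
    rewrite mult_INR plus_IZR mult_IZR -INR_IZR_INZ.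
    replace (INR j * INR d * alpha - beta - (INR j * IZR k + IZR m))
      with (INR j * eta - beta - IZR m) by (unfold eta; ring).
    rewrite Rabs_right in Hdk; lra.
  - destruct (multiple_near_mod1 (- eta) (- beta) N0 ltac:(lra)) as [j [m [Hj Hjm]]].
    exists (j * d)%coq_nat, (Z.of_nat j * k - m)%Z. split; [nia|].
    rewrite mult_INR minus_IZR mult_IZR -INR_IZR_INZ.
    replace (INR j * INR d * alpha - beta - (INR j * IZR k - IZR m))
      with (- (INR j * - eta - - beta - IZR m)) by (unfold eta; ring).
    rewrite Rabs_Ropp. rewrite Rabs_left in Hdk; lra.
Qed.

Lemma cis_add_2PI_IZR x k : cis (x + 2 * PI * IZR k) = cis x.
Proof.
  destruct (Z.le_gt_cases 0 k) as [Hk|Hk].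
  - rewrite -(Z2Nat.id k Hk) -INR_IZR_INZ.
    replace (x + 2 * PI * INR (Z.to_nat k)) with (x + 2 * INR (Z.to_nat k) * PI) by ring.
    unfold cis; rewrite cos_period sin_period; reflexivity.
  - replace k with (- Z.of_nat (Z.to_nat (- k)))%Z by lia.
    rewrite opp_IZR -INR_IZR_INZ.
    set (m := INR (Z.to_nat (- k))).
    replace x with (x + 2 * PI * - m + 2 * m * PI) at 2 by ring.
    unfold cis; rewrite cos_period sin_period; reflexivity.
Qed.

Lemma cis_multiples_dense (t : R) :
  (forall (d : nat) (k : Z), (1 <= d)%coq_nat -> INR d * t <> 2 * PI * IZR k) ->
  forall s eps N0, 0 < eps ->
  exists N : nat, (N0 <= N)%coq_nat /\ Cmod (Csub (cis (INR N * t)) (cis s)) < eps.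
Proof.
  intros Hirr s eps N0 Heps. pose proof PI_RGT_0 as HPI.
  destruct (kronecker (t / (2 * PI)) (s / (2 * PI)) (eps / (2 * PI)) N0) as [N [k [HN Hk]]].
  - intros d k Hd Hdk. apply (Hirr d k Hd).
    replace (INR d * t) with (2 * PI * (INR d * (t / (2 * PI)))) by (field; lra). rewrite Hdk; ring.
  - apply Rdiv_lt_0_compat; lra.
  - exists N. split; [exact HN|].
    rewrite -(cis_add_2PI_IZR s k). eapply Rle_lt_trans; [apply Cmod_cis_sub_le|].
    replace (INR N * t - (s + 2 * PI * IZR k))
      with (2 * PI * (INR N * (t / (2 * PI)) - s / (2 * PI) - IZR k)) by (field; lra).
    rewrite Rabs_mult (Rabs_right (2 * PI)); [|lra].
    apply (Rmult_lt_compat_l (2 * PI)) in Hk; [|lra].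
    replace (2 * PI * (eps / (2 * PI))) with eps in Hk by (field; lra). exact Hk.
Qed.

(** * Density of U_n *)

Lemma unit_circle_cis z : Cmod z = 1 -> exists t, z = cis t.
Proof.
  intro Hz. destruct z as [x y].
  assert (Hxy : x * x + y * y = 1).
  { unfold Cmod in Hz; simpl in Hz.
    rewrite -(sqrt_sqrt (x * x + y * y)); [rewrite Hz; ring | nra]. }
  assert (Hx : -1 <= x <= 1) by (split; nra).
  assert (Hsin : sin (acos x) = Rabs y).
  { rewrite sin_acos; [|exact Hx]. rewrite -sqrt_Rsqr_abs. f_equal. unfold Rsqr; lra. }
  destruct (Rle_or_lt 0 y) as [Hy|Hy].
  - exists (acos x). unfold cis. rewrite cos_acos; [|exact Hx].
    rewrite Hsin Rabs_right; [reflexivity | lra].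
  - exists (- acos x). unfold cis. rewrite cos_neg sin_neg cos_acos; [|exact Hx].
    rewrite Hsin Rabs_left; [|lra]. f_equal; ring.
Qed.

Lemma polar_form z : 0 < Cmod z -> exists t, z = Cscal (Cmod z) (cis t).
Proof.
  intro Hz. destruct (unit_circle_cis (Cscal (/ Cmod z) z)) as [t Ht].
  - rewrite Cmod_Cscal Rabs_right; [field; lra | apply Rle_ge, Rlt_le, Rinv_0_lt_compat, Hz].
  - exists t. rewrite -Ht. unfold Cscal; apply injective_projections; simpl; field; lra.
Qed.

Lemma Cconj_Cpow_polar rho t N :
  Cconj (Cpow (Cscal rho (cis t)) N) = Cscal (rho ^ N) (cis (INR N * - t)).
Proof.
  induction N as [|N IH].
  - unfold Cconj, Cscal, cis, C1; simpl. rewrite Rmult_0_l cos_0 sin_0. f_equal; ring.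
  - replace (Cconj (Cpow (Cscal rho (cis t)) (S N)))
      with (Cmul (Cconj (Cscal rho (cis t))) (Cconj (Cpow (Cscal rho (cis t)) N)))
      by (simpl; unfold Cconj, Cmul; apply injective_projections; simpl; ring).
    rewrite IH S_INR. unfold Cconj, Cscal, Cmul, cis; simpl.
    rewrite Rmult_plus_distr_r Rmult_1_l cos_plus sin_plus cos_neg sin_neg.
    apply injective_projections; simpl; ring.
Qed.

Lemma arg_irrational theta t :
  ~ arg_in_piQ theta -> theta = Cscal (Cmod theta) (cis t) ->
  forall (d : nat) (k : Z), (1 <= d)%coq_nat -> INR d * - t <> 2 * PI * IZR k.
Proof.
  intros Hnarg Ht d k Hd Hdk. apply Hnarg. exists (- 2 * k)%Z, d. split; [apply/ltP; lia|].
  rewrite {1}Ht. do 2 f_equal.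
  assert (0 < INR d) by (apply lt_0_INR; lia). pose proof PI_RGT_0.
  rewrite mult_IZR. apply (Rmult_eq_reg_l (INR d)); [|lra].
  replace (INR d * (PI * (IZR (-2) * IZR k) / INR d)) with (- (2 * PI * IZR k))
    by (simpl; field; lra).
  lra.
Qed.

Lemma INR_le_pow rho N : 2 <= rho -> INR N <= rho ^ N.
Proof.
  intro Hrho. induction N as [|N IH]; [simpl; lra|].
  rewrite S_INR [_ ^ S N]/=. pose proof (pow_R1_Rle rho N ltac:(lra)). nra.
Qed.

Lemma Cmod_Cinv_lt1 z : 1 < Cmod z -> Cmod (Cinv z) < 1.
Proof.
  intro Hz. rewrite Cmod_Cinv; [|lra]. rewrite -{1}Rinv_1. apply Rinv_1_lt_contravar; lra.
Qed.

Lemma U_set_dense (theta a1 a2 : Cplx) (c : R) (n : nat) :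
  2 <= Cmod theta -> ~ arg_in_piQ theta ->
  (forall N : nat, (N >= 1)%nat ->
     Cmod (FT_mu (Cinv theta) a1 a2 (Cscal (4 * PI) (Cconj (Cpow theta N)))) > c) ->
  (1 <= n)%coq_nat -> dense_in_S (U_set (Cinv theta) a1 a2 c n).
Proof.
  intros Hrho Hnarg HFT Hn z Hz eps Heps.
  assert (Hlam : Cmod (Cinv theta) < 1) by (apply Cmod_Cinv_lt1; lra).
  destruct (polar_form theta) as [t Ht]; [lra|].
  destruct (unit_circle_cis z Hz) as [s ->].
  destruct (cis_multiples_dense (- t) (arg_irrational theta t Hnarg Ht) s eps n Heps)
    as [N [HnN HN]].
  exists (cis (INR N * - t)). split; [|exact HN].
  apply U_set_iff; [exact Hlam|]. split; [apply Cmod_cis|].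
  exists (4 * PI * Cmod theta ^ N). split.
  - pose proof (le_INR _ _ HnN). pose proof (INR_le_pow (Cmod theta) N ltac:(lra)).
    pose proof (pow_R1_Rle (Cmod theta) N ltac:(lra)). pose proof PI2_1. nra.
  - replace (Cscal (4 * PI * Cmod theta ^ N) (cis (INR N * - t)))
      with (Cscal (4 * PI) (Cconj (Cpow theta N))).
    + apply HFT. apply/leP. lia.
    + rewrite {1}Ht Cconj_Cpow_polar. unfold Cscal; apply injective_projections; simpl; ring.
Qed.

(* The Pisot, [in_Y] and separation hypotheses are what the paper needs to
   produce the constant [c]. *)
Theorem lemma3p3 (theta a1 a2 : Cplx) (c : R) :
  complex_pisot_unit theta ->
  ~ arg_in_piQ theta ->
  3 < Cmod theta < 4 ->
  in_Y (Cinv theta) a1 -> in_Y (Cinv theta) a2 ->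
  SSC (Cinv theta) a1 a2 ->
  c > 0 ->
  (forall N : nat, (N >= 1)%nat ->
     Cmod (FT_mu (Cinv theta) a1 a2
             (Cscal (4 * PI) (Cconj (Cpow theta N)))) > c) ->
  forall n : nat, (n >= 1)%nat ->
    open_in_S (U_set (Cinv theta) a1 a2 c n) /\
    dense_in_S (U_set (Cinv theta) a1 a2 c n).
Proof.
  intros _ Hnarg Hrho _ _ _ _ HFT n Hn. split.
  - apply U_set_open, Cmod_Cinv_lt1; lra.
  - apply U_set_dense; [lra | exact Hnarg | exact HFT | apply/leP; exact Hn].
Qed.
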